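(* Let $\alpha$, $a_n$ and the $\alpha$-sum-level sets $\mathcal L^{(\alpha)}_n$ be as in the context. Then for every $n\in\mathbb N$, \[\lambda(\mathcal L^{(\alpha)}_n)=\sum_{m=1}^n a_m\,\lambda(\mathcal L^{(\alpha)}_{n-m}).\]
   Context: Let $\mathcal U=[0,1]$, $\lambda$ Lebesgue measure. $\alpha=\{A_n:n\in\mathbb N\}$ is a countable partition of $\mathcal U$ (up to the point $0$) into left-open, right-closed intervals of positive length, ordered from right to left starting with $A_1$, accumulating only at $0$; $a_n:=\lambda(A_n)$, $t_n:=\sum_{k\ge n}a_k$, $A_n=(t_{n+1},t_n]$. $L_\alpha(x)=(t_n-x)/a_n$ on $A_n$, $L_\alpha(0)=0$. $C_\alpha(\ell_1,\dots,\ell_k):=\{x\in\mathcal U:L_\alpha^{i-1}(x)\in A_{\ell_i},\ i=1,\dots,k\}$. For $n\in\mathbb N$, $\mathcal L^{(\alpha)}_n:=\{x\in C_\alpha(\ell_1,\dots,\ell_k):\sum_{i=1}^k\ell_i=n\text{ for some }k\in\mathbb N\}$, and $\mathcal L^{(\alpha)}_0:=\mathcal U$. *)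

From HB Require Import structures.
From mathcomp Require Import all_boot all_order all_algebra.
From mathcomp Require Import all_classical all_reals all_analysis.
Set Implicit Arguments. Unset Strict Implicit. Unset Printing Implicit Defensive.
Import Order.TTheory GRing.Theory Num.Theory.
Local Open Scope classical_set_scope.
Local Open Scope ring_scope.

Section AlphaDefs.
Variable R : realType.
(* The partition alpha is encoded by the lengths a n = lambda(A_n), n >= 1
   (the value a 0 is irrelevant and never used). *)
Variable a : nat -> R.

Definition t_alpha (n : nat) : R := limn (fun N => \sum_(n <= k < N) a k).

Definition A_alpha (n : nat) : set R := `] t_alpha n.+1, t_alpha n]%classic.

Definition U01 : set R := `[0, 1]%classic.

(* L_alpha(x) = (t_n - x)/a_n for x in A_n (n >= 1), L_alpha(0) = 0
   (and 0 outside of U, where it is never used). *)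
Definition L_alpha (x : R) : R :=
  let n := xget 0%N [set n | (0 < n)%N /\ A_alpha n x] in
  if n is 0%N then 0 else (t_alpha n - x) / a n.

Fixpoint C_alpha (s : seq nat) : set R :=
  match s with
  | [::] => U01
  | l :: s' => [set x | A_alpha l x /\ C_alpha s' (L_alpha x)]
  end.

Definition Lev_alpha (n : nat) : set R :=
  if n is 0%N then U01
  else [set x | U01 x /\ exists s : seq nat,
          [/\ s != [::], all (fun l => (0 < l)%N) s, sumn s = n & C_alpha s x]].
End AlphaDefs.

From HB Require Import structures.
From mathcomp Require Import all_boot all_order all_algebra.
From mathcomp Require Import all_classical all_reals all_analysis.
From mathcomp Require Import ring lra zify.
Import Order.TTheory GRing.Theory Num.Theory.
Import numFieldNormedType.Exports.

Set Implicit Arguments.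
Unset Strict Implicit.
Unset Printing Implicit Defensive.
Local Open Scope classical_set_scope.
Local Open Scope ring_scope.

(* On the branch [A_m] the map [L_alpha] is the decreasing affine bijection
   [x |-> (t_m - x) / a_m] of [A_m] onto [0, 1[, which multiplies Lebesgue
   measure by [1 / a_m].  Hence [{x in A_m | L_alpha x \in L_(n - m)}] has
   measure [a_m * lambda(L_(n - m))], and [L_n] is the disjoint union of these
   sets over [1 <= m <= n], because the first digit [m] of a word of digit sum
   [n] is followed by a word of digit sum [n - m] (or by nothing). *)

Section affine_branch.
Variable R : realType.

Definition affine_branch (t c x : R) : R := (t - x) / c.

Lemma measurable_affine_branch (t c : R) :
  measurable_fun [set: R] (affine_branch t c).
Proof.
apply: measurable_realfun.continuous_measurable_fun => x.
by apply: cvgM; [apply: cvgB; [exact: cvg_cst | exact: cvg_id] | exact: cvg_cst].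
Qed.

Lemma measurable_affine_branch_preimage (t c : R) (C : set R) :
  measurable C -> measurable (affine_branch t c @^-1` C).
Proof.
by move=> mC; rewrite -[X in measurable X]setTI; exact: measurable_affine_branch.
Qed.

Lemma lebesgue_measure_affine_branch (t c : R) (C : set R) :
  0 < c -> measurable C ->
  lebesgue_measure (affine_branch t c @^-1` C) = (c%:E * lebesgue_measure C)%E.
Proof.
move=> c_gt0 mC.
have invc_ge0 : 0 <= c^-1 by rewrite invr_ge0 ltW.
(* [c^-1 * lambda(affine_branch t c @^-1` _)] agrees with [lambda] on the
   intervals [`]x, y]], hence everywhere *)
pose mu := mscale (NngNum invc_ge0)
  (pushforward lebesgue_measure (affine_branch t c : _ -> measurableTypeR R)).
transitivity (c%:E * mu (measurable_affine_branch t c) C)%E.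
  by rewrite /mu /mscale /pushforward /= muleA -EFinM mulfV ?gt_eqF // mul1e.
congr (_ * _)%E; rewrite /mu.
apply/esym/lebesgue_measure_unique => // _ [[x y] _ <-].
rewrite -[RHS]/((c^-1)%:E *
  lebesgue_measure (affine_branch t c @^-1` `]x, y]%classic))%E.
have -> : affine_branch t c @^-1` `]x, y]%classic = `[t - c * y, t - c * x[%classic.
  apply/seteqP; split => z /=; rewrite !in_itv /= /affine_branch
    ltr_pdivlMr // ler_pdivrMr // => /andP[z1 z2]; apply/andP; split; lra.
rewrite !lebesgue_measure_itv /= !lte_fin ltrD2l ltrN2 ltr_pM2l //.
case: ifP => _; last by rewrite mule0.
by rewrite -!EFinB -EFinM; congr (_%:E); field; rewrite gt_eqF.
Qed.

Lemma lebesgue_measure_setD1 (B : set R) (r : R) : measurable B ->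
  lebesgue_measure (B `\ r) = lebesgue_measure B.
Proof.
move=> mB; rewrite (measureDI lebesgue_measure mB (measurable_set1 r)).
rewrite [X in (_ + X)%E](_ : _ = 0%E) ?adde0 //.
apply/eqP; rewrite eq_le measure_ge0 andbT -(lebesgue_measure_set1 r).
by apply: le_measure; rewrite ?inE; [exact: measurableI | exact: measurable_set1 |
  exact: subIsetr].
Qed.
End affine_branch.

Section alpha.
Variables (R : realType) (a : nat -> R).
Hypothesis a_pos : forall n : nat, (0 < n)%N -> 0 < a n.
Hypothesis a_sum : (fun N => \sum_(1 <= k < N) a k) @ \oo --> (1 : R).

Let psum m := \sum_(1 <= k < m) a k.

Lemma psum_nondecreasing : nondecreasing_seq psum.
Proof.
apply/nondecreasing_seqP => -[|m]; first by rewrite /psum !big_geq.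
by rewrite /psum [X in _ <= X]big_nat_recr //= lerDl; apply/ltW/a_pos.
Qed.

Lemma psum_le1 m : psum m <= 1.
Proof.
have <- : limn psum = 1 by exact: cvg_lim.
by apply: nondecreasing_cvgn_le; [exact: psum_nondecreasing | apply/cvg_ex; exists 1].
Qed.

Lemma t_alphaE m : (0 < m)%N -> t_alpha a m = 1 - psum m.
Proof.
move=> m_gt0; apply: cvg_lim => //.
have : (fun N => psum N - psum m) @ \oo --> 1 - psum m.
  by apply: cvgB => //; exact: cvg_cst.
apply: cvg_trans; apply: near_eq_cvg; near=> N.
have mN : (m <= N)%N by near: N; exists m.
by rewrite /psum (big_cat_nat m_gt0 mN) /= addrAC subrr add0r.
Unshelve. all: by end_near.
Qed.

Lemma t_alphaS m : (0 < m)%N -> t_alpha a m.+1 = t_alpha a m - a m.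
Proof. by move=> m_gt0; rewrite !t_alphaE // /psum big_nat_recr //=; lra. Qed.

Lemma t_alpha_le1 m : (0 < m)%N -> t_alpha a m <= 1.
Proof.
move=> m_gt0; rewrite t_alphaE // lerBlDr lerDl /psum big_nat sumr_ge0 //.
by move=> k /andP[k_gt0 _]; apply/ltW/a_pos.
Qed.

Lemma t_alpha_gt0 m : (0 < m)%N -> 0 < t_alpha a m.
Proof.
move=> m_gt0; have := psum_le1 m.+1; rewrite /psum big_nat_recr //= -/(psum m).
by rewrite t_alphaE //; have := a_pos m_gt0; lra.
Qed.

Lemma t_alpha_le m k : (0 < m)%N -> (m <= k)%N -> t_alpha a k <= t_alpha a m.
Proof.
move=> m_gt0 mk; rewrite !t_alphaE //; last exact: leq_trans mk.
rewrite lerD2l lerN2 /psum (big_cat_nat _ mk) //= lerDl big_nat sumr_ge0 // => i.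
by move=> /andP[mi _]; apply/ltW/a_pos/(leq_trans m_gt0).
Qed.

Lemma A_alpha_affine m x : (0 < m)%N ->
  A_alpha a m x <-> 0 <= affine_branch (t_alpha a m) (a m) x < 1.
Proof.
move=> m_gt0; have am_gt0 := a_pos m_gt0.
rewrite /A_alpha /= in_itv /= t_alphaS // /affine_branch.
rewrite ler_pdivlMr // ltr_pdivrMr // mul0r mul1r.
by split => /andP[x1 x2]; apply/andP; split; lra.
Qed.

Lemma A_alpha_disjoint m k x : (0 < m)%N -> (0 < k)%N ->
  A_alpha a m x -> A_alpha a k x -> m = k.
Proof.
have lt_A m' k' : (0 < m')%N -> (m' < k')%N -> A_alpha a m' x -> ~ A_alpha a k' x.
  move=> m'_gt0 mk; rewrite /A_alpha /= !in_itv /= => /andP[lt_x _] /andP[_ x_le].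
  by have := le_trans x_le (t_alpha_le (ltn0Sn m') mk); rewrite leNgt lt_x.
move=> m_gt0 k_gt0 Am Ak; case: (ltngtP m k) => // [mk | km].
  by case: (lt_A m k).
by case: (lt_A k m).
Qed.

Lemma A_alpha_sub_U01 m : (0 < m)%N -> A_alpha a m `<=` @U01 R.
Proof.
move=> m_gt0 x; rewrite /A_alpha /U01 /= !in_itv /= => /andP[x1 x2].
by have := t_alpha_gt0 (ltn0Sn m); have := t_alpha_le1 m_gt0; lra.
Qed.

Lemma L_alpha_affine m x : (0 < m)%N -> A_alpha a m x ->
  L_alpha a x = affine_branch (t_alpha a m) (a m) x.
Proof.
move=> m_gt0 Amx; rewrite /L_alpha (@xget_unique _ 0%N _ m) //.
  by case: m m_gt0 Amx.
by move=> k [k_gt0 Akx]; exact: A_alpha_disjoint k_gt0 m_gt0 Akx Amx.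
Qed.

Lemma Lev_alpha_sub_U01 n : Lev_alpha a n `<=` @U01 R.
Proof. by case: n => [|n] x //= []. Qed.

Lemma Lev_alphaP n y : Lev_alpha a n y <->
  exists s, [/\ all (fun l => (0 < l)%N) s, sumn s = n & C_alpha a s y].
Proof.
case: n => [|n] /=.
  split => [Uy | [s [s_pos s_sum Cy]]]; first by exists [::].
  case: s s_pos s_sum Cy => [|l s] /=; first by move=> _ _.
  by move=> /andP[l_gt0 _]; lia.
split => [[_ [s [_ s_pos s_sum Cy]]] | [[|l s] [s_pos s_sum Cy]]] //.
  by exists s.
move: s_pos => /= /andP[l_gt0 s_pos].
by split; [exact: A_alpha_sub_U01 l_gt0 _ (proj1 Cy) | exists (l :: s); split => //=;
  apply/andP].
Qed.

Lemma Lev_alpha_first_digit n x : (0 < n)%N ->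
  Lev_alpha a n x <->
  exists2 m, (0 < m <= n)%N & A_alpha a m x /\ Lev_alpha a (n - m) (L_alpha a x).
Proof.
move=> n_gt0; rewrite Lev_alphaP; split.
  move=> [[|l s] [/= s_pos s_sum Cx]]; first by move: s_sum n_gt0 => <-.
  move: s_pos Cx => /andP[l_gt0 s_pos] [Alx Cs].
  exists l; first by lia.
  by split => //; apply/Lev_alphaP; exists s; split => //; lia.
move=> [m m_bnd [Amx /Lev_alphaP [s [s_pos s_sum Cs]]]].
by exists (m :: s); split => /=; [apply/andP; split; lia | lia | ].
Qed.

Definition Lev_alpha_piece n m : set R :=
  A_alpha a m `&` L_alpha a @^-1` Lev_alpha a (n - m).

(* The point removed is the image of the left end [t_(m+1)] of [A_m], which is
   not in [A_m]. *)
Lemma Lev_alpha_pieceE n m : (0 < m)%N ->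
  Lev_alpha_piece n m =
  affine_branch (t_alpha a m) (a m) @^-1` (Lev_alpha a (n - m) `\ 1).
Proof.
move=> m_gt0; apply/seteqP; split => x /=.
  move=> [Amx]; rewrite /preimage /= (L_alpha_affine m_gt0 Amx) => Lev_x.
  split => //.
  by move: Amx => /(A_alpha_affine x m_gt0) /andP[_ /lt_eqF /eqP].
move=> [Lev_x x_neq1]; have Amx : A_alpha a m x.
  apply/(A_alpha_affine x m_gt0).
  move: (Lev_alpha_sub_U01 Lev_x); rewrite /U01 /= in_itv /= => /andP[-> x_le1].
  by rewrite lt_neqAle x_le1 andbT; apply/eqP.
by split => //; rewrite /preimage /= (L_alpha_affine m_gt0 Amx).
Qed.

Lemma Lev_alpha_decomp n : (0 < n)%N ->
  Lev_alpha a n = \big[setU/set0]_(m < n) Lev_alpha_piece n m.+1.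
Proof.
move=> n_gt0; rewrite -(bigcup_mkord n (fun m => Lev_alpha_piece n m.+1)).
apply/seteqP; split => x.
  move=> /(Lev_alpha_first_digit x n_gt0) [[|m] m_bnd Lx] //.
  by exists m => //=; lia.
move=> [m /= m_lt Lx]; apply/(Lev_alpha_first_digit x n_gt0).
by exists m.+1 => //; lia.
Qed.

Lemma measurable_Lev_alpha_piece n m : (0 < m)%N ->
  measurable (Lev_alpha a (n - m)) -> measurable (Lev_alpha_piece n m).
Proof.
move=> m_gt0 mLev; rewrite Lev_alpha_pieceE //.
apply: measurable_affine_branch_preimage.
by apply: measurableD => //; exact: measurable_set1.
Qed.

Lemma measurable_Lev_alpha n : measurable (Lev_alpha a n).
Proof.
elim/ltn_ind: n => -[_ | n IH]; first exact: measurable_itv.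
rewrite Lev_alpha_decomp //; apply: bigsetU_measurable => m _.
by apply: measurable_Lev_alpha_piece => //; apply: IH; lia.
Qed.

Lemma lebesgue_measure_Lev_alpha_piece n m : (0 < m)%N ->
  lebesgue_measure (Lev_alpha_piece n m) =
  ((a m)%:E * lebesgue_measure (Lev_alpha a (n - m)))%E.
Proof.
move=> m_gt0; have mLev := measurable_Lev_alpha (n - m).
rewrite Lev_alpha_pieceE // lebesgue_measure_affine_branch ?lebesgue_measure_setD1 //.
  exact: a_pos.
by apply: measurableD => //; exact: measurable_set1.
Qed.

Lemma trivIset_Lev_alpha_piece n :
  trivIset setT (fun m => Lev_alpha_piece n m.+1).
Proof.
apply/trivIsetP => i j _ _ ij; apply/seteqP; split => // x [[Aix _] [Ajx _]].
by move/eqP: ij; have [] := A_alpha_disjoint (ltn0Sn i) (ltn0Sn j) Aix Ajx.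
Qed.
End alpha.

Theorem lemma3p1 (R : realType) (a : nat -> R)
  (a_pos : forall n : nat, (0 < n)%N -> 0 < a n)
  (a_sum : (fun N => \sum_(1 <= k < N) a k) @ \oo --> (1 : R))
  (n : nat) (n_pos : (0 < n)%N) :
  (@lebesgue_measure R) (Lev_alpha a n) =
  (\sum_(1 <= m < n.+1) ((a m)%:E * (@lebesgue_measure R) (Lev_alpha a (n - m))))%E.
Proof.
rewrite Lev_alpha_decomp //.
rewrite (@measure_bigsetU _ _ _ lebesgue_measure (fun m => Lev_alpha_piece a n m.+1));
  last 2 first.
- move=> m; apply: measurable_Lev_alpha_piece => //.
  exact: measurable_Lev_alpha a_pos a_sum _.
- exact: trivIset_Lev_alpha_piece a_pos a_sum n.
rewrite big_add1 /= big_mkord; apply: eq_bigr => m _.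
exact: lebesgue_measure_Lev_alpha_piece.
Qed.
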